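(* Let $d_3(n)=\sum_{abc=n}1$ be the three-divisor function (so $\sum_{n\ge1}d_3(n)n^{-s}=\zeta(s)^3$), and for real $x$ and positive integer $H$ let $M_3(x,H)=H\,\mathrm{Res}_{s=1}\big(\zeta(s)^3x^{s-1}\big)$. For positive integers $N,H$ define $$J_3(N,H)=\sum_{N<x\le 2N}\Big|\sum_{x<n\le x+H}d_3(n)-M_3(x,H)\Big|^2,\qquad \widetilde{J}_3(N,H)=\sum_{N<x\le 2N}\Big|\sum_{0\le |n-x|\le H}\Big(1-\frac{|n-x|}{H}\Big)d_3(n)-M_3(x,H)\Big|^2,$$ where $x$ and $n$ run over positive integers. Fix a constant $c>0$. Assume the following (Conjecture CL): for every $\varepsilon>0$ there is $C_\varepsilon>0$ such that $\widetilde{J}_3(N,H)\le C_\varepsilon N^{\varepsilon}NH$ for all positive integers $N,H$ with $H\le cN^{1/3}$. Then for every $\varepsilon>0$ there is $C'_\varepsilon>0$ such that $J_3(N,H)\le C'_\varepsilon N^{\varepsilon}NH^{6/5}$ for all positive integers $N,H$ with $H\le cN^{1/3}$.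
   Context: The notation $A\ll B$ means $|A|\le C B$ for some constant $C$; the estimates are understood as $N\to\infty$. *)

From Stdlib Require Import Reals Lra List Arith.
From Coquelicot Require Import Coquelicot.
Open Scope R_scope.

Definition rsum (l : list nat) (f : nat -> R) : R :=
  fold_right (fun i acc => f i + acc) 0 l.

(* d_3(n) = #{(a,b,c) positive integers : a*b*c = n}  (each factor is <= n) *)
Definition d3 (n : nat) : nat :=
  list_sum (map (fun a => list_sum (map (fun b => list_sum (map (fun c =>
    if Nat.eqb (a * b * c) n then 1%nat else 0%nat) (seq 1 n))) (seq 1 n))) (seq 1 n)).

(* Stieltjes constants, from the Laurent expansion
   zeta(s) = 1/(s-1) + sum_k (-1)^k gamma_k (s-1)^k / k! :
   gamma_k = lim_m ( sum_{n<=m} (log n)^k / n - (log m)^(k+1)/(k+1) ). *)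
Definition stieltjes (k : nat) : R :=
  real (Lim_seq (fun m : nat =>
    rsum (seq 1 m) (fun n => (ln (INR n)) ^ k / INR n)
    - (ln (INR m)) ^ (S k) / INR (S k))).

(* Res_{s=1} ( zeta(s)^3 x^(s-1) ) = (log x)^2/2 + 3 g0 log x + 3 g0^2 - 3 g1 *)
Definition res3 (x : R) : R :=
  (ln x) ^ 2 / 2 + 3 * stieltjes 0 * ln x
  + 3 * (stieltjes 0) ^ 2 - 3 * stieltjes 1.

Definition M3 (x : R) (H : nat) : R := INR H * res3 x.

Definition S3 (x H : nat) : R :=
  rsum (seq (S x) H) (fun n => INR (d3 n)).

Definition S3tilde (x H : nat) : R :=
  rsum (seq 1 (x + H)) (fun n =>
    if Rle_dec (Rabs (INR n - INR x)) (INR H)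
    then (1 - Rabs (INR n - INR x) / INR H) * INR (d3 n)
    else 0).

Definition J3 (N H : nat) : R :=
  rsum (seq (S N) N) (fun x => (S3 x H - M3 (INR x) H) ^ 2).

Definition J3tilde (N H : nat) : R :=
  rsum (seq (S N) N) (fun x => (S3tilde x H - M3 (INR x) H) ^ 2).

From Stdlib Require Import Reals Lra Lia List ZArith.
From Coquelicot Require Import Coquelicot.
Open Scope R_scope.

(* Write e(n) = d_3(n) - res3(n).  Up to the variation of res3 over an interval of length
   H near N, which is O(H^2 log N / N), the sharp sum minus M_3 is the sum of e over
   (x, x + H], and the tent-weighted sum at scale K centred at z + K is the Fejér mean
   (1/K) sum_{a<K} sum_{z+a<n<=z+a+K} e(n).  Averaging over the K shifted block
   decompositions, a sum of length m K is m Fejér means plus boundary sums of length < K,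
   so by Cauchy-Schwarz the mean square over (N, 2N] of sums of length H = m K + r is
   O(m^2 N^(1+eps) K + V_K), with V_K the mean square of sums of length < K.  The same
   step at a scale L < K gives V_K = O((K/L)^2 N^(1+eps) L + V_L), and V_L = O(L^2 N^(1+eps))
   by Cauchy-Schwarz and the conjecture with H = 1, where the smoothed sum is e itself.
   The choice K = H^(9/10), L = H^(3/5) makes every term O(N^(1+eps) H^(6/5)).  The shifted
   windows stay inside (N, 4N], covered by the conjecture at N and 2N; when H > N/2 the
   condition H <= c N^(1/3) leaves only finitely many (N, H). *)

Lemma rsum_cons i l f : rsum (i :: l) f = f i + rsum l f.
Proof. reflexivity. Qed.

Lemma rsum_app l1 l2 f : rsum (l1 ++ l2) f = rsum l1 f + rsum l2 f.
Proof.
  induction l1 as [|i l IH]; simpl; [lra|].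
  unfold rsum in *; simpl; rewrite IH; lra.
Qed.

Lemma rsum_ext l f g : (forall i, In i l -> f i = g i) -> rsum l f = rsum l g.
Proof.
  induction l as [|i l IH]; intros Hfg; [reflexivity|].
  rewrite !rsum_cons, Hfg by (simpl; auto); f_equal; auto with datatypes.
Qed.

Lemma rsum_plus l f g : rsum l (fun i => f i + g i) = rsum l f + rsum l g.
Proof. induction l as [|i l IH]; [simpl; lra|]. rewrite !rsum_cons, IH; lra. Qed.

Lemma rsum_minus l f g : rsum l (fun i => f i - g i) = rsum l f - rsum l g.
Proof. induction l as [|i l IH]; [simpl; lra|]. rewrite !rsum_cons, IH; lra. Qed.

Lemma rsum_scal_l l c f : rsum l (fun i => c * f i) = c * rsum l f.
Proof. induction l as [|i l IH]; [simpl; lra|]. rewrite !rsum_cons, IH; lra. Qed.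

Lemma rsum_const l c : rsum l (fun _ => c) = INR (length l) * c.
Proof.
  induction l as [|i l IH]; [simpl; lra|].
  rewrite rsum_cons, IH; simpl length; rewrite S_INR; lra.
Qed.

Lemma rsum_le l f g : (forall i, In i l -> f i <= g i) -> rsum l f <= rsum l g.
Proof.
  induction l as [|i l IH]; intros Hfg; [simpl; lra|].
  rewrite !rsum_cons; apply Rplus_le_compat; auto with datatypes.
Qed.

Lemma rsum_le_const l f T : (forall i, In i l -> f i <= T) -> rsum l f <= INR (length l) * T.
Proof. intros Hf; rewrite <- rsum_const; apply rsum_le, Hf. Qed.

Lemma rsum_nonneg l f : (forall i, In i l -> 0 <= f i) -> 0 <= rsum l f.
Proof.
  intros Hf; replace 0 with (rsum l (fun _ => 0)) by (rewrite rsum_const; lra).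
  apply rsum_le, Hf.
Qed.

Lemma Rabs_rsum_le l f B : (forall i, In i l -> Rabs (f i) <= B) ->
  Rabs (rsum l f) <= INR (length l) * B.
Proof.
  induction l as [|i l IH]; intros Hf; [simpl; rewrite Rabs_R0; lra|].
  rewrite rsum_cons; simpl length; rewrite S_INR.
  eapply Rle_trans; [apply Rabs_triang|].
  assert (Rabs (f i) <= B) by (apply Hf; simpl; auto).
  assert (Rabs (rsum l f) <= INR (length l) * B) by auto with datatypes.
  lra.
Qed.

Lemma rsum_term_le l f i : In i l -> (forall j, In j l -> 0 <= f j) -> f i <= rsum l f.
Proof.
  induction l as [|k l IH]; intros Hi Hf; [destruct Hi|].
  rewrite rsum_cons; destruct Hi as [<-|Hi].
  - assert (0 <= rsum l f) by (apply rsum_nonneg; auto with datatypes). lra.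
  - assert (0 <= f k) by (apply Hf; simpl; auto).
    assert (f i <= rsum l f) by auto with datatypes. lra.
Qed.

Lemma rsum_comm l1 l2 (F : nat -> nat -> R) :
  rsum l1 (fun i => rsum l2 (fun j => F i j)) = rsum l2 (fun j => rsum l1 (fun i => F i j)).
Proof.
  induction l1 as [|i l IH].
  - transitivity (rsum l2 (fun _ => 0)); [rewrite rsum_const; simpl; lra|reflexivity].
  - rewrite rsum_cons, IH, <- rsum_plus; reflexivity.
Qed.

Lemma rsum_sqr_le l f : rsum l f ^ 2 <= INR (length l) * rsum l (fun i => f i ^ 2).
Proof.
  induction l as [|i l IH]; [simpl; lra|].
  rewrite !rsum_cons; simpl length; rewrite S_INR.
  set (n := INR (length l)) in *; set (s := rsum l f) in *.
  set (q := rsum l (fun i => f i ^ 2)) in *.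
  assert (Hn : 0 <= n) by apply pos_INR.
  assert (Hq : 0 <= q) by (apply rsum_nonneg; intros; apply pow2_ge_0).
  (* [2 f s <= n f^2 + q]: multiply by [n] and use [s^2 <= n q] *)
  assert (2 * f i * s <= n * f i ^ 2 + q).
  { destruct (Req_dec n 0) as [Hn0|Hn0].
    - assert (s = 0) by (rewrite Hn0 in IH; nra). subst s; nra.
    - apply (Rmult_le_reg_l n); [lra|]. pose proof (pow2_ge_0 (n * f i - s)). nra. }
  nra.
Qed.

Lemma rsum_seq_shift a k z g :
  rsum (seq (z + k) a) g = rsum (seq k a) (fun t => g (z + t)%nat).
Proof.
  revert k; induction a as [|a IH]; intros k; [reflexivity|].
  simpl seq; rewrite !rsum_cons, <- IH; do 3 f_equal; lia.
Qed.

(** * Short interval sums and their mean squares *)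

Definition isum (e : nat -> R) (z a : nat) : R := rsum (seq (S z) a) e.

Definition fejer (e : nat -> R) (z K : nat) : R :=
  / INR K * rsum (seq 0 K) (fun a => isum e (z + a) K).

Definition sqsum (xs : list nat) (F : nat -> R) : R := rsum xs (fun x => F x ^ 2).

Lemma isum_add e z a b : isum e z (a + b) = isum e z a + isum e (z + a) b.
Proof. unfold isum; rewrite seq_app, rsum_app; do 3 f_equal; lia. Qed.

Lemma isum_mul e z m K : isum e z (m * K) = rsum (seq 0 m) (fun j => isum e (z + j * K) K).
Proof.
  induction m as [|m IH]; [reflexivity|].
  rewrite seq_S, rsum_app, <- IH; simpl rsum.
  replace (S m * K)%nat with (m * K + K)%nat by lia.
  rewrite isum_add; lra.
Qed.

(* Averaging [isum e x (m K) = isum e x a + isum e (x + a) (m K) - isum e (x + m K) a]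
   over [a < K] turns the sharp sum of length [m K] into [m] Fejér means plus a
   boundary term made of sums shorter than [K]. *)
Lemma isum_mul_fejer e x m K : (1 <= K)%nat ->
  isum e x (m * K) = rsum (seq 0 m) (fun j => fejer e (x + j * K) K)
    + / INR K * rsum (seq 0 K) (fun a => isum e x a - isum e (x + m * K) a).
Proof.
  intros HK; assert (HKr : INR K <> 0) by (apply not_0_INR; lia).
  assert (Hfejer : rsum (seq 0 m) (fun j => fejer e (x + j * K) K)
      = / INR K * rsum (seq 0 K) (fun a => isum e (x + a) (m * K))).
  { unfold fejer; rewrite rsum_scal_l, rsum_comm; f_equal.
    apply rsum_ext; intros a _; rewrite isum_mul.
    apply rsum_ext; intros j _; f_equal; lia. }
  rewrite Hfejer, <- Rmult_plus_distr_l, <- rsum_plus.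
  transitivity (/ INR K * rsum (seq 0 K) (fun _ => isum e x (m * K))).
  - rewrite rsum_const, length_seq; field; auto.
  - f_equal; apply rsum_ext; intros a _.
    pose proof (isum_add e x a (m * K)) as Hleft; pose proof (isum_add e x (m * K) a).
    rewrite Nat.add_comm in Hleft; lra.
Qed.

Lemma sqsum_ext xs F G : (forall x, In x xs -> F x = G x) -> sqsum xs F = sqsum xs G.
Proof. intros HFG; apply rsum_ext; intros x Hx; rewrite HFG; auto. Qed.

Lemma sqsum_scal xs c F : sqsum xs (fun x => c * F x) = c ^ 2 * sqsum xs F.
Proof. unfold sqsum; rewrite <- rsum_scal_l; apply rsum_ext; intros; ring. Qed.

Lemma sqsum_plus_le xs F G : sqsum xs (fun x => F x + G x) <= 2 * sqsum xs F + 2 * sqsum xs G.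
Proof.
  unfold sqsum; rewrite <- !rsum_scal_l, <- rsum_plus; apply rsum_le; intros.
  pose proof (pow2_ge_0 (F i - G i)); nra.
Qed.

Lemma sqsum_near_le xs F G d : (forall x, In x xs -> Rabs (F x - G x) <= d) ->
  sqsum xs F <= 2 * sqsum xs G + 2 * INR (length xs) * d ^ 2.
Proof.
  intros Hd; unfold sqsum.
  replace (2 * INR (length xs) * d ^ 2) with (INR (length xs) * (2 * d ^ 2)) by ring.
  rewrite <- rsum_scal_l, <- rsum_const, <- rsum_plus; apply rsum_le; intros x Hx.
  assert ((F x - G x) ^ 2 <= d ^ 2).
  { rewrite <- (pow2_abs (F x - G x)); apply pow_incr; split; auto; apply Rabs_pos. }
  pose proof (pow2_ge_0 (F x - 2 * G x)); nra.
Qed.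

Lemma sqsum_rsum_le xs l (G : nat -> nat -> R) T :
  (forall j, In j l -> sqsum xs (G j) <= T) ->
  sqsum xs (fun x => rsum l (fun j => G j x)) <= INR (length l) ^ 2 * T.
Proof.
  intros HT; unfold sqsum.
  apply Rle_trans with (rsum xs (fun x => INR (length l) * rsum l (fun j => G j x ^ 2))).
  - apply rsum_le; intros; apply rsum_sqr_le.
  - rewrite rsum_scal_l, rsum_comm; simpl pow; rewrite Rmult_1_r, Rmult_assoc.
    apply Rmult_le_compat_l; [apply pos_INR|]; apply rsum_le_const, HT.
Qed.

Lemma sqsum_mean_le xs K (g : nat -> nat -> R) V : (1 <= K)%nat ->
  (forall a, (a < K)%nat -> sqsum xs (g a) <= V) ->
  sqsum xs (fun x => / INR K * rsum (seq 0 K) (fun a => g a x)) <= V.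
Proof.
  intros HK HV; assert (HKp : 0 < INR K) by (apply lt_0_INR; lia).
  rewrite sqsum_scal.
  apply Rle_trans with ((/ INR K) ^ 2 * (INR (length (seq 0 K)) ^ 2 * V)).
  - apply Rmult_le_compat_l; [apply pow2_ge_0|].
    apply sqsum_rsum_le; intros a Ha; apply in_seq in Ha; apply HV; lia.
  - rewrite length_seq; right; field; lra.
Qed.

Lemma sqsum_isum_le e xs s a A :
  (forall t, (1 <= t <= a)%nat -> sqsum xs (fun x => e (x + (s + t))%nat) <= A) ->
  sqsum xs (fun x => isum e (x + s) a) <= INR a ^ 2 * A.
Proof.
  intros HA.
  rewrite (sqsum_ext xs _ (fun x => rsum (seq 1 a) (fun t => e (x + (s + t))%nat))).
  - replace (INR a) with (INR (length (seq 1 a))) by (rewrite length_seq; auto).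
    apply sqsum_rsum_le.
    intros t Ht; apply in_seq in Ht; apply HA; lia.
  - intros x _; unfold isum; replace (S (x + s)) with (x + s + 1)%nat by lia.
    rewrite rsum_seq_shift; apply rsum_ext; intros; f_equal; lia.
Qed.

Lemma sqsum_isum_fejer_le e xs s K m r T V : (1 <= K)%nat -> (r < K)%nat ->
  (forall j, (j < m)%nat -> sqsum xs (fun x => fejer e (x + (s + j * K)) K) <= T) ->
  (forall a, (a < K)%nat -> sqsum xs (fun x => isum e (x + s) a) <= V) ->
  (forall a, (a < K)%nat -> sqsum xs (fun x => isum e (x + (s + m * K)) a) <= V) ->
  sqsum xs (fun x => isum e (x + s) (m * K + r)) <= 4 * INR m ^ 2 * T + 18 * V.
Proof.
  intros HK Hr HT HV1 HV2.
  set (F1 := fun x => rsum (seq 0 m) (fun j => fejer e (x + s + j * K) K)).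
  set (F2 := fun x => / INR K * rsum (seq 0 K)
                        (fun a => isum e (x + s) a - isum e (x + s + m * K) a)).
  set (F3 := fun x => isum e (x + s + m * K) r).
  rewrite (sqsum_ext xs _ (fun x => F1 x + F2 x + F3 x))
    by (intros; rewrite isum_add, isum_mul_fejer; auto).
  assert (H1 : sqsum xs F1 <= INR m ^ 2 * T).
  { replace (INR m) with (INR (length (seq 0 m))) by (rewrite length_seq; auto).
    apply sqsum_rsum_le; intros j Hj; apply in_seq in Hj.
    rewrite (sqsum_ext xs _ (fun x => fejer e (x + (s + j * K)) K))
      by (intros; f_equal; lia).
    apply HT; lia. }
  assert (H2 : sqsum xs F2 <= 4 * V).
  { apply sqsum_mean_le; auto; intros a Ha.
    rewrite (sqsum_ext xs _ (fun x => isum e (x + s) a + -1 * isum e (x + (s + m * K)) a))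
      by (intros; rewrite Nat.add_assoc; ring).
    eapply Rle_trans; [apply sqsum_plus_le|].
    rewrite sqsum_scal; specialize (HV1 a Ha); specialize (HV2 a Ha); lra. }
  assert (H3 : sqsum xs F3 <= V).
  { rewrite (sqsum_ext xs _ (fun x => isum e (x + (s + m * K)) r))
      by (intros; unfold F3; f_equal; lia).
    apply HV2; auto. }
  eapply Rle_trans; [apply (sqsum_plus_le xs (fun x => F1 x + F2 x) F3)|].
  pose proof (sqsum_plus_le xs F1 F2).
  lra.
Qed.

Lemma sqsum_shift_le N u g : (u <= 2 * N)%nat ->
  sqsum (seq (S N) N) (fun x => g (x + u)%nat) <= sqsum (seq (S N) (3 * N)) g.
Proof.
  intros Hu; unfold sqsum.
  rewrite (rsum_ext _ _ (fun x => g (u + x)%nat ^ 2)) by (intros; rewrite Nat.add_comm; auto).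
  rewrite <- (rsum_seq_shift N (S N) u (fun y => g y ^ 2)).
  replace (3 * N)%nat with (u + (N + (2 * N - u)))%nat by lia.
  rewrite !seq_app, !rsum_app, (Nat.add_comm u (S N)).
  assert (0 <= rsum (seq (S N) u) (fun y => g y ^ 2)) by (apply rsum_nonneg; intros; apply pow2_ge_0).
  assert (0 <= rsum (seq (S N + u + N) (2 * N - u)) (fun y => g y ^ 2))
    by (apply rsum_nonneg; intros; apply pow2_ge_0).
  lra.
Qed.

(** * The smoothed sum as a Fejér mean *)

Lemma rsum_seq_indicator lo hi K :
  rsum (seq 0 K) (fun a => if ((lo <=? a) && (a <? hi))%bool then 1 else 0)
  = INR (Nat.min hi K - lo).
Proof.
  induction K as [|K IH]; [simpl; replace (Nat.min hi 0 - lo)%nat with 0%nat by lia; reflexivity|].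
  rewrite seq_S, rsum_app, IH; simpl rsum.
  destruct (Nat.leb_spec lo K), (Nat.ltb_spec K hi); simpl.
  - replace (Nat.min hi (S K) - lo)%nat with (S (Nat.min hi K - lo)) by lia.
    rewrite S_INR; lra.
  - replace (Nat.min hi (S K) - lo)%nat with (Nat.min hi K - lo)%nat by lia; lra.
  - replace (Nat.min hi (S K) - lo)%nat with (Nat.min hi K - lo)%nat by lia; lra.
  - replace (Nat.min hi (S K) - lo)%nat with (Nat.min hi K - lo)%nat by lia; lra.
Qed.

Lemma rsum_seq_restrict lo len M g : (1 <= lo)%nat -> (lo + len <= 1 + M)%nat ->
  rsum (seq lo len) g
  = rsum (seq 1 M) (fun n => if ((lo <=? n) && (n <? lo + len))%bool then g n else 0).
Proof.
  intros Hlo Hlen.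
  set (G := fun n => if ((lo <=? n) && (n <? lo + len))%bool then g n else 0).
  assert (Hout : forall a l, (a + l <= lo \/ lo + len <= a)%nat -> rsum (seq a l) G = 0).
  { intros a l Hal; rewrite (rsum_ext _ _ (fun _ => 0)); [rewrite rsum_const; lra|].
    intros n Hn; apply in_seq in Hn; unfold G.
    destruct (Nat.leb_spec lo n), (Nat.ltb_spec n (lo + len)); simpl; auto; lia. }
  replace M with (lo - 1 + (len + (1 + M - (lo + len))))%nat at 1 by lia.
  rewrite !seq_app, !rsum_app, (Hout 1%nat) by lia.
  replace (1 + (lo - 1))%nat with lo by lia.
  rewrite (Hout (lo + len)%nat) by lia; rewrite (rsum_ext (seq lo len) G g); [lra|].
  intros n Hn; apply in_seq in Hn; unfold G.
  destruct (Nat.leb_spec lo n), (Nat.ltb_spec n (lo + len)); simpl; auto; lia.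
Qed.

(* The number of [a < K] with [z + a < n <= z + a + K], divided by [K], is the tent
   weight of [n] around [z + K]. *)
Lemma tent_weight z K n : (1 <= K)%nat -> (n <= z + K + K)%nat ->
  INR (Nat.min (n - z) K - (n - (z + K))) / INR K
  = if Rle_dec (Rabs (INR n - INR (z + K))) (INR K)
    then 1 - Rabs (INR n - INR (z + K)) / INR K else 0.
Proof.
  intros HK Hn; assert (HKp : 0 < INR K) by (apply lt_0_INR; lia).
  rewrite plus_INR.
  destruct (le_lt_dec n z) as [Hnz|Hnz].
  - replace (Nat.min (n - z) K - (n - (z + K)))%nat with 0%nat by lia.
    assert (INR n <= INR z) by (apply le_INR; lia).
    rewrite Rabs_left1 by lra.
    destruct (Rle_dec _ _) as [Hle|Hle]; [|simpl; lra].
    replace (INR n) with (INR z) by lra; simpl; field; lra.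
  - replace n with (z + (n - z))%nat in * by lia; set (d := (n - z)%nat) in *.
    replace (z + d - z)%nat with d by lia; rewrite plus_INR.
    assert (1 <= INR d) by (apply (le_INR 1); lia).
    destruct (le_lt_dec d K) as [HdK|HdK].
    + replace (Nat.min d K - (z + d - (z + K)))%nat with d by lia.
      assert (INR d <= INR K) by (apply le_INR; auto).
      rewrite Rabs_left1 by lra.
      destruct (Rle_dec _ _) as [Hle|Hle]; [field; lra|lra].
    + replace (Nat.min d K - (z + d - (z + K)))%nat with (K + K - d)%nat by lia.
      assert (INR K < INR d) by (apply lt_INR; auto).
      assert (INR d <= INR K + INR K) by (rewrite <- plus_INR; apply le_INR; lia).
      rewrite minus_INR, plus_INR, Rabs_right by lia || lra.
      destruct (Rle_dec _ _) as [Hle|Hle]; [field; lra|lra].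
Qed.

Lemma S3tilde_fejer z K : (1 <= K)%nat ->
  S3tilde (z + K) K = fejer (fun n => INR (d3 n)) z K.
Proof.
  intros HK; set (g := fun n => INR (d3 n)); unfold fejer, isum.
  rewrite (rsum_ext (seq 0 K) _ (fun a => rsum (seq 1 (z + K + K)) (fun n =>
     if ((S (z + a) <=? n) && (n <? S (z + a) + K))%bool then g n else 0)))
    by (intros a Ha; apply in_seq in Ha; apply rsum_seq_restrict; lia).
  rewrite rsum_comm, <- rsum_scal_l; unfold S3tilde; apply rsum_ext; intros n Hn.
  apply in_seq in Hn.
  rewrite (rsum_ext (seq 0 K) _ (fun a =>
     g n * (if ((n - (z + K) <=? a) && (a <? n - z))%bool then 1 else 0))).
  2:{ intros a _.
      destruct (Nat.leb_spec (S (z + a)) n), (Nat.ltb_spec n (S (z + a) + K)),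
        (Nat.leb_spec (n - (z + K)) a), (Nat.ltb_spec a (n - z)); simpl; try lia; ring. }
  rewrite rsum_scal_l, rsum_seq_indicator.
  replace (/ INR K * (g n * INR (Nat.min (n - z) K - (n - (z + K)))))
    with (INR (Nat.min (n - z) K - (n - (z + K))) / INR K * g n) by (unfold Rdiv; ring).
  rewrite tent_weight by lia; destruct (Rle_dec _ _); unfold g; ring.
Qed.

(** * Variation of the main term *)

Definition e3 (n : nat) : R := INR (d3 n) - res3 (INR n).

Definition Q3 (y K : nat) : R := S3tilde y K - M3 (INR y) K.

(* A Lipschitz constant of [res3] on [(N, 6 N]]. *)
Definition lip3 (N : nat) : R := (ln (6 * INR N) + 3 * Rabs (stieltjes 0)) / INR N.

Lemma Q3_1 y : (1 <= y)%nat -> Q3 y 1 = e3 y.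
Proof.
  intros Hy; replace y with (y - 1 + 1)%nat by lia.
  unfold Q3, M3, e3; rewrite S3tilde_fejer by lia; unfold fejer, isum; simpl.
  replace (S (y - 1 + 0)) with (y - 1 + 1)%nat by lia; field.
Qed.

Lemma Q3_sub_fejer z K : (1 <= K)%nat ->
  Q3 (z + K) K - fejer e3 z K = / INR K * rsum (seq 0 K) (fun a =>
    rsum (seq (S (z + a)) K) (fun n => res3 (INR n) - res3 (INR (z + K)))).
Proof.
  intros HK; assert (HKp : 0 < INR K) by (apply lt_0_INR; lia).
  unfold Q3, M3; rewrite S3tilde_fejer by auto; unfold fejer, isum, e3.
  rewrite (rsum_ext (seq 0 K) (fun a => rsum _ (fun n => res3 (INR n) - res3 (INR (z + K))))
    (fun a => rsum (seq (S (z + a)) K) (fun n => INR (d3 n))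
      - rsum (seq (S (z + a)) K) (fun n => INR (d3 n) - res3 (INR n)) - INR K * res3 (INR (z + K)))).
  - rewrite !rsum_minus, rsum_const, length_seq; field; lra.
  - intros a _; rewrite !rsum_minus, rsum_const, length_seq; ring.
Qed.

Lemma S3_sub_isum x H : S3 x H - M3 (INR x) H - isum e3 x H
  = rsum (seq (S x) H) (fun n => res3 (INR n) - res3 (INR x)).
Proof. unfold S3, M3, isum, e3; rewrite !rsum_minus, rsum_const, length_seq; ring. Qed.

Lemma ln_sub_le u v : 0 < v <= u -> ln u - ln v <= (u - v) / v.
Proof.
  intros Hv; rewrite <- ln_div by lra.
  pose proof (exp_ineq1_le (ln (u / v))); rewrite exp_ln in H by (apply Rdiv_lt_0_compat; lra).
  replace ((u - v) / v) with (u / v - 1) by (field; lra); lra.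
Qed.

Lemma lip3_ge0 N : (1 <= N)%nat -> 0 <= lip3 N.
Proof.
  intros HN; assert (1 <= INR N) by (apply (le_INR 1); auto).
  assert (0 <= ln (6 * INR N)) by (rewrite <- ln_1; apply ln_le; lra).
  pose proof (Rabs_pos (stieltjes 0)).
  apply Rdiv_le_0_compat; lra.
Qed.

Lemma res3_lipschitz N u v : (1 <= N)%nat ->
  INR N < u <= 6 * INR N -> INR N < v <= 6 * INR N ->
  Rabs (res3 u - res3 v) <= Rabs (u - v) * lip3 N.
Proof.
  intros HN.
  assert (HN1 : 1 <= INR N) by (apply (le_INR 1); auto).
  assert (Hle : forall u v, INR N < u <= 6 * INR N -> INR N < v <= 6 * INR N -> v <= u ->
            Rabs (res3 u - res3 v) <= Rabs (u - v) * lip3 N).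
  { clear u v; intros u v Hu Hv Hvu.
    replace (res3 u - res3 v) with ((ln u - ln v) * ((ln u + ln v) / 2 + 3 * stieltjes 0))
      by (unfold res3; field).
    assert (Hlog0 : 0 <= ln u - ln v) by (pose proof (ln_le v u); lra).
    assert (Hlog : ln u - ln v <= (u - v) / INR N).
    { eapply Rle_trans; [apply ln_sub_le; lra|].
      apply Rmult_le_compat_l; [lra|]; apply Rinv_le_contravar; lra. }
    assert (0 <= ln v) by (rewrite <- ln_1; apply ln_le; lra).
    assert (ln u <= ln (6 * INR N)) by (apply ln_le; lra).
    assert (Hmid : Rabs ((ln u + ln v) / 2 + 3 * stieltjes 0)
                   <= ln (6 * INR N) + 3 * Rabs (stieltjes 0)).
    { eapply Rle_trans; [apply Rabs_triang|].
      rewrite Rabs_right, Rabs_mult, (Rabs_right 3) by lra; pose proof (ln_le v u); lra. }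
    rewrite Rabs_mult, (Rabs_right (ln u - ln v)), (Rabs_right (u - v)) by lra.
    unfold lip3; replace ((u - v) * ((ln (6 * INR N) + 3 * Rabs (stieltjes 0)) / INR N))
      with ((u - v) / INR N * (ln (6 * INR N) + 3 * Rabs (stieltjes 0))) by (field; lra).
    apply Rmult_le_compat; auto; apply Rabs_pos. }
  intros Hu Hv; destruct (Rle_lt_dec v u); [apply Hle; auto|].
  rewrite Rabs_minus_sym, (Rabs_minus_sym u); apply Hle; auto; lra.
Qed.

Lemma res3_sub_le N m n D : (1 <= N)%nat -> (N < m <= 6 * N)%nat -> (N < n <= 6 * N)%nat ->
  (n <= m + D)%nat -> (m <= n + D)%nat ->
  Rabs (res3 (INR n) - res3 (INR m)) <= INR D * lip3 N.
Proof.
  intros HN Hm Hn Hnm Hmn.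
  assert (H6 : forall k, (N < k <= 6 * N)%nat -> INR N < INR k <= 6 * INR N).
  { intros k Hk; split; [apply lt_INR; lia|].
    replace 6 with (INR 6) by (simpl; lra); rewrite <- mult_INR; apply le_INR; lia. }
  eapply Rle_trans; [apply (res3_lipschitz N); [auto|apply H6; auto|apply H6; auto]|].
  apply Rmult_le_compat_r; [apply lip3_ge0; auto|].
  apply le_INR in Hnm, Hmn; rewrite plus_INR in Hnm, Hmn.
  apply Rabs_le; lra.
Qed.

Lemma Q3_fejer_close N z K : (1 <= N)%nat -> (1 <= K)%nat -> (N <= z)%nat ->
  (z + 2 * K <= 6 * N)%nat ->
  Rabs (Q3 (z + K) K - fejer e3 z K) <= INR K ^ 2 * lip3 N.
Proof.
  intros HN HK Hz Hz6; assert (HKp : 0 < INR K) by (apply lt_0_INR; lia).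
  rewrite Q3_sub_fejer, Rabs_mult, Rabs_right by (auto; left; apply Rinv_0_lt_compat; lra).
  apply Rle_trans with (/ INR K * (INR K * (INR K * (INR K * lip3 N)))); [|right; field; lra].
  apply Rmult_le_compat_l; [left; apply Rinv_0_lt_compat; lra|].
  replace (INR K * (INR K * (INR K * lip3 N)))
    with (INR (length (seq 0 K)) * (INR K * (INR K * lip3 N))) by (rewrite length_seq; ring).
  apply Rabs_rsum_le; intros a Ha; apply in_seq in Ha.
  replace (INR K * (INR K * lip3 N))
    with (INR (length (seq (S (z + a)) K)) * (INR K * lip3 N)) by (rewrite length_seq; ring).
  apply Rabs_rsum_le; intros n Hn; apply in_seq in Hn.
  apply res3_sub_le; lia.
Qed.

Lemma S3_isum_close N x H : (1 <= N)%nat -> (N < x)%nat -> (x + H <= 6 * N)%nat ->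
  Rabs (S3 x H - M3 (INR x) H - isum e3 x H) <= INR H ^ 2 * lip3 N.
Proof.
  intros HN Hx Hx6; rewrite S3_sub_isum.
  replace (INR H ^ 2 * lip3 N) with (INR (length (seq (S x) H)) * (INR H * lip3 N))
    by (rewrite length_seq; ring).
  apply Rabs_rsum_le; intros n Hn; apply in_seq in Hn.
  apply res3_sub_le; lia.
Qed.

(** * From smoothed to sharp mean squares *)

Lemma pow2_mul_pow2_le a b h : 0 <= a <= h -> 0 <= b <= h -> a ^ 2 * b ^ 2 <= h ^ 4.
Proof.
  intros Ha Hb; replace (h ^ 4) with (h ^ 2 * h ^ 2) by ring.
  apply Rmult_le_compat; try apply pow2_ge_0; apply pow_incr; lra.
Qed.

Section SmoothedToSharp.

(* [Q y K] plays the role of the smoothed discrepancy at scale [K] centred at [y]. *)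
Variables (e : nat -> R) (Q : nat -> nat -> R) (N H : nat) (B delta : R).

Hypothesis H_ge1 : (1 <= H)%nat.
Hypothesis H_le_half : (2 * H <= N)%nat.
Hypothesis B_ge0 : 0 <= B.
Hypothesis Q_1 : forall y, (1 <= y)%nat -> Q y 1 = e y.
Hypothesis Q_fejer : forall K z, (1 <= K <= H)%nat -> (N <= z <= 2 * N + 2 * H)%nat ->
  Rabs (Q (z + K) K - fejer e z K) <= INR K ^ 2 * delta.
Hypothesis Q_sqsum : forall K, (1 <= K <= H)%nat ->
  sqsum (seq (S N) (3 * N)) (fun y => Q y K) <= B * INR N * INR K.

Let xs := seq (S N) N.

Let fejer_bound (K : nat) : R := 2 * (B * INR N * INR K) + 2 * INR N * (INR K ^ 2 * delta) ^ 2.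

Lemma sqsum_e_shift_le u : (u <= 2 * N)%nat -> sqsum xs (fun x => e (x + u)%nat) <= B * INR N.
Proof.
  intros Hu; eapply Rle_trans; [apply sqsum_shift_le; auto|].
  rewrite (sqsum_ext _ e (fun y => Q y 1)) by (intros y Hy; apply in_seq in Hy; rewrite Q_1; auto; lia).
  replace (B * INR N) with (B * INR N * INR 1) by (simpl; ring); apply Q_sqsum; lia.
Qed.

Lemma sqsum_fejer_le K s : (1 <= K <= H)%nat -> (s <= 2 * H)%nat ->
  sqsum xs (fun x => fejer e (x + s) K) <= fejer_bound K.
Proof.
  intros HK Hs; unfold fejer_bound.
  eapply Rle_trans.
  { apply (sqsum_near_le xs _ (fun x => Q (x + s + K)%nat K) (INR K ^ 2 * delta)).
    intros x Hx; unfold xs in Hx; apply in_seq in Hx.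
    rewrite Rabs_minus_sym; apply Q_fejer; lia. }
  unfold xs; rewrite length_seq.
  assert (sqsum (seq (S N) N) (fun x => Q (x + s + K)%nat K) <= B * INR N * INR K).
  { rewrite (sqsum_ext _ _ (fun x => Q (x + (s + K))%nat K)) by (intros; f_equal; lia).
    eapply Rle_trans; [apply (sqsum_shift_le N (s + K) (fun y => Q y K)); lia|].
    apply Q_sqsum; lia. }
  lra.
Qed.

Lemma sqsum_isum_short_le s a : (s + a <= 2 * N)%nat ->
  sqsum xs (fun x => isum e (x + s) a) <= INR a ^ 2 * (B * INR N).
Proof. intros Hsa; apply sqsum_isum_le; intros t Ht; apply sqsum_e_shift_le; lia. Qed.

Lemma mul_fejer_bound_le m K X : (K <= H)%nat -> (m * K <= H)%nat -> INR m ^ 2 * INR K <= X ->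
  4 * INR m ^ 2 * fejer_bound K <= 8 * X * (B * INR N) + 8 * INR N * INR H ^ 4 * delta ^ 2.
Proof.
  intros HKH HmK HX; unfold fejer_bound.
  assert (Hpow : INR m ^ 2 * INR K ^ 4 <= INR H ^ 4).
  { replace (INR m ^ 2 * INR K ^ 4) with ((INR m * INR K) ^ 2 * INR K ^ 2) by ring.
    rewrite <- mult_INR; apply pow2_mul_pow2_le; split; try apply pos_INR; apply le_INR; auto. }
  assert (HBN : 0 <= B * INR N) by (apply Rmult_le_pos; [auto|apply pos_INR]).
  assert (HNd : 0 <= INR N * delta ^ 2) by (apply Rmult_le_pos; [apply pos_INR|apply pow2_ge_0]).
  replace (4 * INR m ^ 2 * (2 * (B * INR N * INR K) + 2 * INR N * (INR K ^ 2 * delta) ^ 2))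
    with (8 * (INR m ^ 2 * INR K) * (B * INR N) + 8 * (INR N * delta ^ 2) * (INR m ^ 2 * INR K ^ 4))
    by ring.
  replace (8 * INR N * INR H ^ 4 * delta ^ 2) with (8 * (INR N * delta ^ 2) * INR H ^ 4) by ring.
  assert (INR m ^ 2 * INR K * (B * INR N) <= X * (B * INR N)) by (apply Rmult_le_compat_r; auto).
  assert (INR N * delta ^ 2 * (INR m ^ 2 * INR K ^ 4) <= INR N * delta ^ 2 * INR H ^ 4)
    by (apply Rmult_le_compat_l; auto).
  lra.
Qed.

Lemma sqsum_isum_below_le K L X2 X3 s a : (1 <= L <= H)%nat -> (K <= H)%nat ->
  (forall q, (q * L < K)%nat -> INR q ^ 2 * INR L <= X2) -> INR L ^ 2 <= X3 ->
  (s <= H)%nat -> (a < K)%nat ->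
  sqsum xs (fun x => isum e (x + s) a)
  <= 8 * X2 * (B * INR N) + 8 * INR N * INR H ^ 4 * delta ^ 2 + 18 * (X3 * (B * INR N)).
Proof.
  intros HL HK HX2 HX3 Hs Ha.
  assert (HBN : 0 <= B * INR N) by (apply Rmult_le_pos; [auto|apply pos_INR]).
  assert (Hshort : forall s' b, (s' <= 2 * H)%nat -> (b < L)%nat ->
            sqsum xs (fun x => isum e (x + s') b) <= X3 * (B * INR N)).
  { intros s' b Hs' Hb; eapply Rle_trans; [apply sqsum_isum_short_le; lia|].
    apply Rmult_le_compat_r; auto; eapply Rle_trans; [|apply HX3].
    apply pow_incr; split; [apply pos_INR|apply le_INR; lia]. }
  set (q := (a / L)%nat); set (r := (a mod L)%nat).
  assert (Haq : a = (q * L + r)%nat) by (unfold q, r; rewrite Nat.mul_comm; apply Nat.div_mod; lia).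
  assert (Hr : (r < L)%nat) by (unfold r; apply Nat.mod_upper_bound; lia).
  rewrite Haq; eapply Rle_trans.
  { apply (sqsum_isum_fejer_le e xs s L q r (fejer_bound L) (X3 * (B * INR N))); try lia.
    - intros j Hj; apply sqsum_fejer_le; [lia|].
      pose proof (Nat.mul_le_mono_r j q L); lia.
    - intros b Hb; apply Hshort; lia.
    - intros b Hb; apply Hshort; lia. }
  pose proof (mul_fejer_bound_le q L X2 ltac:(lia) ltac:(lia) ltac:(apply HX2; lia)); lra.
Qed.

Lemma sqsum_isum_two_scale_le K L X1 X2 X3 : (1 <= K <= H)%nat -> (1 <= L <= H)%nat ->
  (forall m, (m * K <= H)%nat -> INR m ^ 2 * INR K <= X1) ->
  (forall q, (q * L < K)%nat -> INR q ^ 2 * INR L <= X2) -> INR L ^ 2 <= X3 ->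
  sqsum xs (fun x => isum e x H)
  <= B * INR N * (8 * X1 + 144 * X2 + 324 * X3) + 152 * INR N * INR H ^ 4 * delta ^ 2.
Proof.
  intros HK HL HX1 HX2 HX3.
  set (m := (H / K)%nat); set (r := (H mod K)%nat).
  assert (Hm : H = (m * K + r)%nat) by (unfold m, r; rewrite Nat.mul_comm; apply Nat.div_mod; lia).
  assert (Hr : (r < K)%nat) by (unfold r; apply Nat.mod_upper_bound; lia).
  rewrite (sqsum_ext xs _ (fun x => isum e (x + 0) (m * K + r)))
    by (intros; rewrite Nat.add_0_r, <- Hm; auto).
  eapply Rle_trans.
  { apply sqsum_isum_fejer_le; try lia.
    - intros j Hj; apply sqsum_fejer_le; [lia|].
      pose proof (Nat.mul_le_mono_r j m K); lia.
    - intros a Ha; apply (sqsum_isum_below_le K L X2 X3); auto; lia.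
    - intros a Ha; apply (sqsum_isum_below_le K L X2 X3); auto; lia. }
  pose proof (mul_fejer_bound_le m K X1 ltac:(lia) ltac:(lia) ltac:(apply HX1; lia)); lra.
Qed.

End SmoothedToSharp.

Lemma sqsum_Q3 N K :
  sqsum (seq (S N) (3 * N)) (fun y => Q3 y K) = J3tilde N K + J3tilde (2 * N) K.
Proof.
  unfold J3tilde, sqsum, Q3; replace (3 * N)%nat with (N + 2 * N)%nat by lia.
  rewrite seq_app, rsum_app; do 3 f_equal; lia.
Qed.

Lemma J3_le_sqsum_isum N H : (1 <= N)%nat -> (H <= 4 * N)%nat ->
  J3 N H <= 2 * sqsum (seq (S N) N) (fun x => isum e3 x H) + 2 * INR N * (INR H ^ 2 * lip3 N) ^ 2.
Proof.
  intros HN HH.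
  pose proof (sqsum_near_le (seq (S N) N) (fun x => S3 x H - M3 (INR x) H)
    (fun x => isum e3 x H) (INR H ^ 2 * lip3 N)) as Hnear.
  rewrite length_seq in Hnear; apply Hnear.
  intros x Hx; apply in_seq in Hx; apply S3_isum_close; lia.
Qed.

Lemma floor_between y : 1 <= y -> exists n : nat, (1 <= n)%nat /\ INR n <= y <= 2 * INR n.
Proof.
  intros Hy; destruct (archimed y) as [Hup1 Hup2].
  assert (Hz : (1 < up y)%Z) by (apply lt_IZR; lra).
  exists (Z.to_nat (up y - 1)).
  assert (2 <= IZR (up y)) by (apply IZR_le; lia).
  rewrite INR_IZR_INZ, Z2Nat.id, minus_IZR by lia; split; [lia|lra].
Qed.

Lemma sqr_quotient_le m K Y X : 0 < INR K -> INR (m * K) <= Y -> Y ^ 2 <= INR K * X ->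
  INR m ^ 2 * INR K <= X.
Proof.
  intros HK HmK HY; rewrite mult_INR in HmK.
  assert (0 <= INR m * INR K) by (apply Rmult_le_pos; apply pos_INR).
  apply (Rmult_le_reg_l (INR K)); [auto|].
  replace (INR K * (INR m ^ 2 * INR K)) with ((INR m * INR K) ^ 2) by ring.
  eapply Rle_trans; [apply pow_incr; split; eauto|]; auto.
Qed.

Lemma Rpower_ge1 x a : 1 <= x -> 0 <= a -> 1 <= Rpower x a.
Proof. intros Hx Ha; rewrite <- (Rpower_O x) by lra; apply Rle_Rpower; lra. Qed.

(* The scales [K ~ H^(9/10)] and [L ~ H^(3/5)] balance the three terms
   [H^2 / K], [K^2 / L] and [L^2] at [H^(6/5)]. *)
Lemma two_scales H : (1 <= H)%nat -> exists K L : nat,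
  (1 <= K <= H)%nat /\ (1 <= L <= H)%nat /\
  (forall m, (m * K <= H)%nat -> INR m ^ 2 * INR K <= 2 * Rpower (INR H) (6 / 5)) /\
  (forall q, (q * L < K)%nat -> INR q ^ 2 * INR L <= 2 * Rpower (INR H) (6 / 5)) /\
  INR L ^ 2 <= Rpower (INR H) (6 / 5).
Proof.
  intros HH; set (h := INR H); assert (Hh : 1 <= h) by (apply (le_INR 1); auto).
  assert (Hpow_le : forall a, a <= 1 -> Rpower h a <= h).
  { intros a Ha; rewrite <- (Rpower_1 h) at 2 by lra; apply Rle_Rpower; lra. }
  assert (Hpow_plus : forall a b, Rpower h a * Rpower h b = Rpower h (a + b))
    by (intros; rewrite Rpower_plus; auto).
  destruct (floor_between (Rpower h (9 / 10))) as [K [HK1 HK]]; [apply Rpower_ge1; lra|].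
  destruct (floor_between (Rpower h (3 / 5))) as [L [HL1 HL]]; [apply Rpower_ge1; lra|].
  assert (HKp : 0 < INR K) by (apply lt_0_INR; lia).
  assert (HLp : 0 < INR L) by (apply lt_0_INR; lia).
  assert (HKH : (K <= H)%nat) by (apply INR_le; fold h; pose proof (Hpow_le (9 / 10) ltac:(lra)); lra).
  assert (HLH : (L <= H)%nat) by (apply INR_le; fold h; pose proof (Hpow_le (3 / 5) ltac:(lra)); lra).
  assert (H65 : 0 < Rpower h (6 / 5)) by (unfold Rpower; apply exp_pos).
  exists K, L; repeat split; try lia.
  - intros m Hm; apply (sqr_quotient_le m K h); auto; [apply le_INR; auto|].
    replace (h ^ 2) with (Rpower h (9 / 10) * Rpower h (11 / 10))
      by (rewrite Hpow_plus, <- Rpower_pow by lra; f_equal; simpl; lra).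
    assert (Rpower h (11 / 10) <= Rpower h (6 / 5)) by (apply Rle_Rpower; lra).
    pose proof (Rpower_ge1 h (11 / 10) Hh ltac:(lra)); nra.
  - intros q Hq; apply (sqr_quotient_le q L (Rpower h (9 / 10))); auto.
    + apply Rle_trans with (INR K); [apply le_INR; lia|lra].
    + replace (Rpower h (9 / 10) ^ 2) with (Rpower h (3 / 5) * Rpower h (6 / 5))
        by (rewrite Hpow_plus, <- Rpower_pow, Rpower_mult by (unfold Rpower; apply exp_pos);
            f_equal; simpl; lra).
      nra.
  - replace (Rpower h (6 / 5)) with (Rpower h (3 / 5) ^ 2)
      by (rewrite <- Rpower_pow, Rpower_mult by (unfold Rpower; apply exp_pos); f_equal; simpl; lra).
    apply pow_incr; lra.
Qed.

Lemma J3_le_of_J3tilde N H B : (1 <= H)%nat -> (2 * H <= N)%nat -> 0 <= B ->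
  (forall K, (1 <= K <= H)%nat -> J3tilde N K + J3tilde (2 * N) K <= B * INR N * INR K) ->
  J3 N H <= 1256 * B * INR N * Rpower (INR H) (6 / 5) + 306 * INR N * INR H ^ 4 * lip3 N ^ 2.
Proof.
  intros HH HHN HB HJ.
  eapply Rle_trans; [apply J3_le_sqsum_isum; lia|].
  destruct (two_scales H HH) as [K [L [HK [HL [HX1 [HX2 HX3]]]]]].
  assert (Hsharp := sqsum_isum_two_scale_le e3 Q3 N H B (lip3 N) HH HHN HB Q3_1
    ltac:(intros; apply Q3_fejer_close; lia)
    ltac:(intros; rewrite sqsum_Q3; auto) K L _ _ _ HK HL HX1 HX2 HX3).
  lra.
Qed.

Lemma ln_sqr_le x : 1 <= x -> ln x ^ 2 <= 4 * x.
Proof.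
  intros Hx; assert (Hs : 0 < sqrt x) by (apply sqrt_lt_R0; lra).
  assert (Hxx : sqrt x * sqrt x = x) by (apply sqrt_sqrt; lra).
  assert (Hln : ln x = 2 * ln (sqrt x)) by (rewrite <- Hxx at 1; rewrite ln_mult by auto; ring).
  assert (ln (sqrt x) <= sqrt x - 1).
  { pose proof (exp_ineq1_le (ln (sqrt x))); rewrite exp_ln in H by auto; lra. }
  assert (0 <= ln x) by (rewrite <- ln_1; apply ln_le; lra).
  nra.
Qed.

Lemma N_lip3_sqr_le N : (1 <= N)%nat ->
  (INR N * lip3 N) ^ 2 <= (48 + 2 * (3 * Rabs (stieltjes 0)) ^ 2) * INR N.
Proof.
  intros HN; assert (HN1 : 1 <= INR N) by (apply (le_INR 1); auto).
  set (g := 3 * Rabs (stieltjes 0)).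
  replace (INR N * lip3 N) with (ln (6 * INR N) + g) by (unfold lip3, g; field; lra).
  pose proof (ln_sqr_le (6 * INR N) ltac:(lra)).
  pose proof (pow2_ge_0 (ln (6 * INR N) - g)); pose proof (pow2_ge_0 g).
  nra.
Qed.

Lemma pow3_le_of_le_cbrt c N H : 0 < c -> (0 < N)%nat ->
  INR H <= c * Rpower (INR N) (1 / 3) -> INR H ^ 3 <= c ^ 3 * INR N.
Proof.
  intros Hc HN HH; assert (HN1 : 0 < INR N) by (apply lt_0_INR; auto).
  assert (Hcbrt : Rpower (INR N) (1 / 3) ^ 3 = INR N).
  { rewrite <- Rpower_pow, Rpower_mult by (unfold Rpower; apply exp_pos).
    replace (1 / 3 * INR 3) with 1 by (simpl; field); apply Rpower_1; auto. }
  rewrite <- Hcbrt, <- Rpow_mult_distr; apply pow_incr; split; [apply pos_INR|auto].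
Qed.

Lemma double_le_of_cube_le c N H : 0 < c -> INR H ^ 3 <= c ^ 3 * INR N ->
  8 * c ^ 3 <= INR N ^ 2 -> (2 * H <= N)%nat.
Proof.
  intros Hc Hcube HN; apply INR_le; rewrite mult_INR; simpl (INR 2).
  assert (0 <= INR N) by apply pos_INR; assert (0 <= INR H) by apply pos_INR.
  assert ((2 * INR H) ^ 3 <= INR N ^ 3) by nra.
  destruct (Rle_lt_dec (2 * INR H) (INR N)) as [|Hlt]; auto.
  assert (0 < (2 * INR H - INR N) * ((2 * INR H) ^ 2 + 2 * INR H * INR N + INR N ^ 2))
    by (apply Rmult_lt_0_compat; nra).
  nra.
Qed.

Lemma nat_above x : exists n : nat, x <= INR n.
Proof.
  destruct (archimed (Rabs x)) as [Hup _].
  assert (0 <= up (Rabs x))%Z by (apply le_IZR; pose proof (Rabs_pos x); lra).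
  exists (Z.to_nat (up (Rabs x))); rewrite INR_IZR_INZ, Z2Nat.id by auto.
  pose proof (RRle_abs x); lra.
Qed.

Lemma bounded_on_box (g : nat -> nat -> R) A B : exists M, 0 <= M /\
  forall n h, (n <= A)%nat -> (h <= B)%nat -> g n h <= M.
Proof.
  exists (rsum (seq 0 (S A)) (fun n => rsum (seq 0 (S B)) (fun h => Rabs (g n h)))); split.
  - apply rsum_nonneg; intros; apply rsum_nonneg; intros; apply Rabs_pos.
  - intros n h Hn Hh; eapply Rle_trans; [apply RRle_abs|].
    eapply Rle_trans; [|apply (rsum_term_le _ _ n)].
    + apply (rsum_term_le (seq 0 (S B)) (fun h => Rabs (g n h)) h);
        [apply in_seq; lia|intros; apply Rabs_pos].
    + apply in_seq; lia.
    + intros; apply rsum_nonneg; intros; apply Rabs_pos.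
Qed.

Lemma J3_small_bound c : 0 < c -> exists M, 0 <= M /\ forall N H, (0 < N)%nat ->
  INR H <= c * Rpower (INR N) (1 / 3) -> INR N ^ 2 < 8 * c ^ 3 -> J3 N H <= M.
Proof.
  intros Hc; destruct (nat_above (8 * c ^ 3)) as [A HA].
  destruct (nat_above (c ^ 3 * INR A)) as [B HB].
  destruct (bounded_on_box J3 A B) as [M [HM0 HM]].
  exists M; split; auto; intros N H HN HH HN2; apply HM.
  - apply INR_le; assert (1 <= INR N) by (apply (le_INR 1); lia); nra.
  - apply INR_le; pose proof (pow3_le_of_le_cbrt c N H Hc HN HH).
    assert (INR N <= INR A) by (assert (1 <= INR N) by (apply (le_INR 1); lia); nra).
    assert (INR H <= INR H ^ 3)
      by (destruct H; [simpl; lra|assert (1 <= INR (S H)) by (apply (le_INR 1); lia); nra]).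
    assert (0 < c ^ 3) by (apply pow_lt; auto); nra.
Qed.

Lemma J3tilde_pair_le c C eps N K : 0 < c ->
  (forall N H : nat, (0 < N)%nat -> (0 < H)%nat -> INR H <= c * Rpower (INR N) (1 / 3) ->
     J3tilde N H <= C * Rpower (INR N) eps * INR N * INR H) ->
  (0 < N)%nat -> (0 < K)%nat -> INR K <= c * Rpower (INR N) (1 / 3) ->
  J3tilde N K + J3tilde (2 * N) K
  <= C * (1 + 2 * Rpower 2 eps) * Rpower (INR N) eps * INR N * INR K.
Proof.
  intros Hc HCL HN HK HKc; assert (HN1 : 1 <= INR N) by (apply (le_INR 1); lia).
  pose proof (HCL N K HN HK HKc) as HJ1.
  assert (HKc2 : INR K <= c * Rpower (INR (2 * N)) (1 / 3)).
  { eapply Rle_trans; [apply HKc|]; apply Rmult_le_compat_l; [lra|].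
    apply Rle_Rpower_l; [lra|]; split; [lra|apply le_INR; lia]. }
  pose proof (HCL (2 * N)%nat K ltac:(lia) HK HKc2) as HJ2.
  rewrite mult_INR, <- Rpower_mult_distr in HJ2 by (simpl; lra).
  replace (INR 2) with 2 in HJ2 by (simpl; lra).
  replace (C * (1 + 2 * Rpower 2 eps) * Rpower (INR N) eps * INR N * INR K)
    with (C * Rpower (INR N) eps * INR N * INR K
          + C * (Rpower 2 eps * Rpower (INR N) eps) * (2 * INR N) * INR K) by ring.
  lra.
Qed.

Lemma lip3_error_le c N H : (1 <= N)%nat -> INR H ^ 3 <= c ^ 3 * INR N ->
  INR N * INR H ^ 4 * lip3 N ^ 2
  <= c ^ 3 * (48 + 2 * (3 * Rabs (stieltjes 0)) ^ 2) * (INR H * INR N).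
Proof.
  intros HN Hcube; assert (HN1 : 1 <= INR N) by (apply (le_INR 1); auto).
  assert (Hprod : INR H ^ 3 * (INR N * lip3 N) ^ 2
                  <= c ^ 3 * INR N * ((48 + 2 * (3 * Rabs (stieltjes 0)) ^ 2) * INR N)).
  { apply Rmult_le_compat; auto; [apply pow_le, pos_INR|apply pow2_ge_0|].
    apply N_lip3_sqr_le; auto. }
  apply (Rmult_le_reg_l (INR N)); [lra|].
  replace (INR N * (INR N * INR H ^ 4 * lip3 N ^ 2))
    with (INR H * (INR H ^ 3 * (INR N * lip3 N) ^ 2)) by ring.
  replace (INR N * (c ^ 3 * (48 + 2 * (3 * Rabs (stieltjes 0)) ^ 2) * (INR H * INR N)))
    with (INR H * (c ^ 3 * INR N * ((48 + 2 * (3 * Rabs (stieltjes 0)) ^ 2) * INR N))) by ring.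
  apply Rmult_le_compat_l; [apply pos_INR|auto].
Qed.

Lemma J3_large_bound c C eps : 0 < c -> 0 < C -> 0 <= eps ->
  (forall N H : nat, (0 < N)%nat -> (0 < H)%nat -> INR H <= c * Rpower (INR N) (1 / 3) ->
     J3tilde N H <= C * Rpower (INR N) eps * INR N * INR H) ->
  exists A, 0 <= A /\ forall N H : nat, (0 < N)%nat -> (0 < H)%nat ->
    INR H <= c * Rpower (INR N) (1 / 3) -> 8 * c ^ 3 <= INR N ^ 2 ->
    J3 N H <= A * Rpower (INR N) eps * INR N * Rpower (INR H) (6 / 5).
Proof.
  intros Hc HC Heps HCL.
  set (B0 := C * (1 + 2 * Rpower 2 eps)).
  set (E0 := c ^ 3 * (48 + 2 * (3 * Rabs (stieltjes 0)) ^ 2)).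
  assert (HB0 : 0 <= B0) by (unfold B0; pose proof (exp_pos (eps * ln 2)); unfold Rpower; nra).
  assert (HE0 : 0 <= E0) by (unfold E0; pose proof (pow_lt c 3 Hc); nra).
  exists (1256 * B0 + 306 * E0); split; [lra|]; intros N H HN HH Hcbrt HN2.
  assert (HN1 : 1 <= INR N) by (apply (le_INR 1); lia).
  assert (HH1 : 1 <= INR H) by (apply (le_INR 1); lia).
  set (P := Rpower (INR N) eps); set (y := Rpower (INR H) (6 / 5)).
  assert (HP : 1 <= P) by (apply Rpower_ge1; lra).
  assert (Hy : INR H <= y).
  { unfold y; rewrite <- (Rpower_1 (INR H)) at 1 by lra; apply Rle_Rpower; lra. }
  assert (Hcube := pow3_le_of_le_cbrt c N H Hc HN Hcbrt).
  assert (Hmain := J3_le_of_J3tilde N H (B0 * P) ltac:(lia)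
    (double_le_of_cube_le c N H Hc Hcube HN2) ltac:(nra)
    ltac:(intros K HK; apply (J3tilde_pair_le c); auto; [lia|];
          assert (INR K <= INR H) by (apply le_INR; lia); lra)).
  assert (Herr := lip3_error_le c N H ltac:(lia) Hcube); fold E0 in Herr.
  assert (HHN : INR H * INR N <= P * INR N * y).
  { assert (INR H * INR N <= y * INR N) by (apply Rmult_le_compat_r; lra).
    assert (y * INR N <= P * (y * INR N))
      by (rewrite <- (Rmult_1_l (y * INR N)) at 1; apply Rmult_le_compat_r; nra).
    lra. }
  fold y in Hmain; nra.
Qed.
Theorem mainTheorem1 (c : R) (hc : 0 < c)
  (CL : forall eps : R, 0 < eps -> exists C : R, 0 < C /\
     forall N H : nat, (0 < N)%nat -> (0 < H)%nat ->
       INR H <= c * Rpower (INR N) (1 / 3) ->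
       J3tilde N H <= C * Rpower (INR N) eps * INR N * INR H) :
  forall eps : R, 0 < eps -> exists C' : R, 0 < C' /\
     forall N H : nat, (0 < N)%nat -> (0 < H)%nat ->
       INR H <= c * Rpower (INR N) (1 / 3) ->
       J3 N H <= C' * Rpower (INR N) eps * INR N * Rpower (INR H) (6 / 5).
Proof.
  intros eps Heps; destruct (CL eps Heps) as [C [HC HCL]].
  destruct (J3_small_bound c hc) as [M [HM0 HM]].
  destruct (J3_large_bound c C eps hc HC ltac:(lra) HCL) as [A [HA0 HA]].
  exists (A + M + 1); split; [lra|]; intros N H HN HH Hcbrt.
  assert (Hscale : 1 <= Rpower (INR N) eps * INR N * Rpower (INR H) (6 / 5)).
  { assert (1 <= INR N) by (apply (le_INR 1); lia).
    assert (1 <= INR H) by (apply (le_INR 1); lia).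
    pose proof (Rpower_ge1 (INR N) eps ltac:(lra) ltac:(lra)).
    pose proof (Rpower_ge1 (INR H) (6 / 5) ltac:(lra) ltac:(lra)).
    rewrite <- (Rmult_1_l 1), <- (Rmult_1_l 1) at 1.
    repeat apply Rmult_le_compat; lra. }
  destruct (Rlt_le_dec (INR N ^ 2) (8 * c ^ 3)) as [Hsmall|Hlarge].
  - pose proof (HM N H HN Hcbrt Hsmall); nra.
  - pose proof (HA N H HN HH Hcbrt Hlarge); nra.
Qed.
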